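(* For each prime $p$, let $\Phi_p=\{x\mapsto j+px : j\in\{0,2,4,\dots\},\ 0\le j\le p-1\}$ (so $\Phi_2=\{x\mapsto 2x\}$ and, for $p>2$, $\Phi_p=\{px,2+px,\dots,p-1+px\}$), and let $\mathcal{C}_p=\{\sum_{i\ge0}a_ip^i\in\mathbb{Z}_p : a_i\text{ even for all } i\}$ (so $\mathcal{C}_2=\{0\}$). Let $\mathcal{C}_{\mathbb{A}_0}=\prod_{p}\mathcal{C}_p\subseteq\prod_p\mathbb{Z}_p\subseteq\mathbb{A}_0$ and define $\Phi$ on subsets of $\prod_p\mathbb{Z}_p$ of product form by $\Phi\big(\prod_pA_p\big)=\prod_p\bigcup_{\phi\in\Phi_p}\phi(A_p)$. Then $\Phi(\mathcal{C}_{\mathbb{A}_0})=\mathcal{C}_{\mathbb{A}_0}$; that is, the ad\`elic Cantor string $\mathcal{CS}_{\mathbb{A}_0}=\prod_p\mathcal{CS}_p$ is self-similar in $\mathbb{A}_0$.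
   Context: $\mathbb{Z}_p$ is the ring of $p$-adic integers, $\mathbb{Q}_p$ the field of $p$-adic numbers. The set of finite ad\`eles is $\mathbb{A}_0=\{(x_2,x_3,x_5,\dots): x_p\in\mathbb{Q}_p\text{ for all primes }p,\ x_p\in\mathbb{Z}_p\text{ for all but finitely many }p\}$. For each prime $p$, $\mathcal{CS}_p=\mathbb{Z}_p\setminus\mathcal{C}_p$ is the $p$-adic Cantor string (for $p=2$, $\mathcal{CS}_2=\bigcup_{n\ge0}(2^n+2^{n+1}\mathbb{Z}_2)$), and the ad\`elic Cantor string is $\mathcal{CS}_{\mathbb{A}_0}=\prod_p\mathcal{CS}_p$, with associated ad\`elic Cantor set $\mathcal{C}_{\mathbb{A}_0}=\prod_p\mathcal{C}_p$. In this paper, the ad\`elic Cantor string is called self-similar when its associated Cantor set is invariant under the componentwise iterated function system $\Phi$, i.e. $\Phi(\mathcal{C}_{\mathbb{A}_0})=\mathcal{C}_{\mathbb{A}_0}$. *)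

From mathcomp Require Import all_boot.
From mathcomp Require Import boolp classical_sets.
Set Implicit Arguments. Unset Strict Implicit. Unset Printing Implicit Defensive.
Local Open Scope classical_set_scope.

(* The p-adic integers Z_p as the inverse limit lim_n Z/p^n Z :
   compatible sequences of residues x_n in [0, p^n). *)
Record Zp (p : nat) := MkZp {
  zp_seq :> nat -> nat;
  zp_bound : forall n, zp_seq n < p ^ n;
  zp_compat : forall n, zp_seq n.+1 %% p ^ n = zp_seq n }.

Section ZpOps.
Variables (p : nat) (hp : 0 < p).

Lemma zp_mod_lt (a n : nat) : a %% p ^ n < p ^ n.
Proof. by rewrite ltn_pmod // expn_gt0 hp. Qed.

Lemma zp_dvd_succ (n : nat) : p ^ n %| p ^ n.+1.
Proof. by rewrite expnS dvdn_mull. Qed.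

Definition zpnat (c : nat) : Zp p :=
  @MkZp p (fun n => c %% p ^ n) (fun n => zp_mod_lt c n)
    (fun n => modn_dvdm c (zp_dvd_succ n)).

Lemma zpadd_compat (x y : Zp p) n :
  (x n.+1 + y n.+1) %% p ^ n.+1 %% p ^ n = (x n + y n) %% p ^ n.
Proof.
by rewrite modn_dvdm ?zp_dvd_succ // -modnDm !zp_compat.
Qed.

Lemma zpmul_compat (x y : Zp p) n :
  (x n.+1 * y n.+1) %% p ^ n.+1 %% p ^ n = (x n * y n) %% p ^ n.
Proof.
by rewrite modn_dvdm ?zp_dvd_succ // -modnMm !zp_compat.
Qed.

Definition zpadd (x y : Zp p) : Zp p :=
  @MkZp p (fun n => (x n + y n) %% p ^ n) (fun n => zp_mod_lt _ n)
    (zpadd_compat x y).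
Definition zpmul (x y : Zp p) : Zp p :=
  @MkZp p (fun n => (x n * y n) %% p ^ n) (fun n => zp_mod_lt _ n)
    (zpmul_compat x y).

Definition zpphi (j : nat) (x : Zp p) : Zp p :=
  zpadd (zpnat j) (zpmul (zpnat p) x).
End ZpOps.

(* i-th digit a_i of the p-adic expansion x = sum_i a_i p^i, a_i in [0,p) *)
Definition zpdigit p (x : Zp p) (i : nat) : nat := x i.+1 %/ p ^ i.

Definition cantor_p p : set (Zp p) := [set x | forall i, ~~ odd (zpdigit x i)].

Definition Prime := {p : nat | prime p}.

Definition pgt0 (q : Prime) : 0 < sval q := prime_gt0 (svalP q).

Definition Phi_index (p : nat) : set nat := [set j | j < p /\ ~~ odd j].

Definition Phi_p (q : Prime) (A : set (Zp (sval q))) : set (Zp (sval q)) :=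
  \bigcup_(j in Phi_index (sval q)) (zpphi (pgt0 q) j @` A).

Definition ZA := forall q : Prime, Zp (sval q).

Definition prodset (A : forall q : Prime, set (Zp (sval q))) : set ZA :=
  [set x | forall q, A q (x q)].

Definition Phi (A : forall q : Prime, set (Zp (sval q))) : set ZA :=
  prodset (fun q => @Phi_p q (A q)).

Definition cantor_A : set ZA := prodset (fun q => cantor_p (p := sval q)).

From mathcomp Require Import all_boot.
From mathcomp Require Import boolp classical_sets.
Local Open Scope classical_set_scope.

(* The contraction x |-> j + p x prepends the digit j < p to the p-adic
   expansion of x.  Conversely every x is obtained this way from its first
   digit and its shift x |-> (x - a_0) / p.  Hence the images of C_p under the
   maps of Phi_p (j even) are exactly the elements of C_p, and Phi, acting
   componentwise, fixes the product of the C_p. *)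

Lemma eq_zp p (x y : Zp p) : (forall n, x n = y n) -> x = y.
Proof.
case: x y => [xs xb xc] [ys yb yc] /= /funext exy; subst ys.
by rewrite (Prop_irrelevance xb yb) (Prop_irrelevance xc yc).
Qed.

Lemma zp_modn p (x : Zp p) k m : k <= m -> x m %% p ^ k = x k.
Proof.
move=> /subnKC <-; elim: (m - k) => [|d IHd].
  by rewrite addn0 modn_small ?zp_bound.
rewrite addnS -(modn_dvdm _ (_ : p ^ k %| p ^ (k + d))) ?zp_compat //.
by rewrite dvdn_exp2l // leq_addr.
Qed.

Lemma zp_at0 p (x : Zp p) : x 0 = 0.
Proof. by have := zp_bound x 0; rewrite expn0; case: (x 0). Qed.

Lemma zpdigit0 p (x : Zp p) : zpdigit x 0 = x 1.
Proof. by rewrite /zpdigit expn0 divn1. Qed.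

Lemma zpdigit_lt p (x : Zp p) : zpdigit x 0 < p.
Proof. by have := zp_bound x 1; rewrite zpdigit0 expn1. Qed.

Section Contraction.
Variables (p : nat) (p_gt0 : 0 < p).

Lemma zpphiE (j : nat) (y : Zp p) n : zpphi p_gt0 j y n = (j + p * y n) %% p ^ n.
Proof. by rewrite /= modnDm -[RHS]modnDmr -modnMml modnDmr. Qed.

Lemma zpphiS (j : nat) (y : Zp p) n : j < p -> zpphi p_gt0 j y n.+1 = j + p * y n.
Proof.
move=> jp; rewrite zpphiE (divn_eq (y n.+1) (p ^ n)) zp_compat.
rewrite mulnDr mulnA (mulnC p) -mulnA -expnS addnCA modnMDl modn_small //.
rewrite expnS; apply: (@leq_trans (p * (y n).+1)).
  by rewrite mulnS ltn_add2r.
by rewrite leq_mul2l zp_bound orbT.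
Qed.

Lemma zpdigit_phi0 (j : nat) (y : Zp p) : j < p -> zpdigit (zpphi p_gt0 j y) 0 = j.
Proof. by move=> jp; rewrite zpdigit0 zpphiS // zp_at0 muln0 addn0. Qed.

Lemma zpdigit_phiS (j : nat) (y : Zp p) i : j < p ->
  zpdigit (zpphi p_gt0 j y) i.+1 = zpdigit y i.
Proof.
move=> jp; rewrite /zpdigit zpphiS // expnS divnMA addnC mulnC.
by rewrite divnMDl // (divn_small jp) addn0.
Qed.

Lemma zpshift_bound (x : Zp p) n : x n.+1 %/ p < p ^ n.
Proof. by rewrite ltn_divLR // -expnSr zp_bound. Qed.

Lemma zpshift_compat (x : Zp p) n : x n.+2 %/ p %% p ^ n = x n.+1 %/ p.
Proof. by rewrite modn_divl -expnSr zp_compat. Qed.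

Definition zpshift (x : Zp p) : Zp p :=
  MkZp (zpshift_bound x) (zpshift_compat x).

Lemma zpdigit_shift (x : Zp p) i : zpdigit (zpshift x) i = zpdigit x i.+1.
Proof. by rewrite /zpdigit /= -divnMA -expnS. Qed.

Lemma zpphi_digit_shift (x : Zp p) : zpphi p_gt0 (zpdigit x 0) (zpshift x) = x.
Proof.
apply: eq_zp => -[|n]; first by rewrite !zp_at0.
rewrite zpphiS ?zpdigit_lt // zpdigit0 /= -[x 1]expn1 -(@zp_modn p x 1 n.+1) //.
by rewrite [in RHS](divn_eq (x n.+1) (p ^ 1)) expn1 addnC mulnC.
Qed.

Lemma zpphi_cantor (j : nat) (y : Zp p) :
  Phi_index p j -> cantor_p y -> cantor_p (zpphi p_gt0 j y).
Proof.
move=> [jp j_even] yC [|i]; first by rewrite zpdigit_phi0.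
by rewrite zpdigit_phiS.
Qed.

Lemma cantor_phi_decomp (x : Zp p) : cantor_p x ->
  exists2 j, Phi_index p j & exists2 y, cantor_p y & zpphi p_gt0 j y = x.
Proof.
move=> xC; exists (zpdigit x 0); first by split; [exact: zpdigit_lt | exact: xC].
exists (zpshift x); last exact: zpphi_digit_shift.
by move=> i; rewrite zpdigit_shift.
Qed.

Lemma bigcup_phi_cantor :
  \bigcup_(j in Phi_index p) (zpphi p_gt0 j @` cantor_p (p := p)) = cantor_p (p := p).
Proof.
apply/seteqP; split => x.
- by move=> [j jP] [y yC <-]; exact: zpphi_cantor.
- by move=> /cantor_phi_decomp [j jP [y yC <-]]; exists j => //; exists y.
Qed.
End Contraction.

Lemma Phi_p_cantor (q : Prime) : Phi_p (cantor_p (p := sval q)) = cantor_p (p := sval q).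
Proof. exact: bigcup_phi_cantor. Qed.

Theorem theorem4p8 :
  Phi (fun q => cantor_p (p := sval q)) = cantor_A.
Proof.
by apply/seteqP; split => x xP q; move: (xP q); rewrite Phi_p_cantor.
Qed.
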